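(* Let $f:\mathbb{E}\to\mathbb{R}$ be radially lower semicontinuous on some neighborhood of $x\in\mathbb{E}$ and $\ell$-stable at $x$, and suppose $f'_D(x;u)=0$ for all $u\in\mathbb{E}$. Then for every $h\in\mathbb{E}$ the limit \[ \lim_{t\downarrow 0,\,h'\to h}\frac{f(x+th')-f(x+th)}{t^2} \] exists and equals $0$.
   Context: $\mathbb{E}$ is a real finite-dimensional Euclidean space. The lower Dini directional derivative is $f'_D(y;u)=\liminf_{t\downarrow 0}t^{-1}[f(y+tu)-f(y)]$. $f$ is radially lower semicontinuous on a set $U$ iff for every $y\in U$ and direction $v$ the function $s\mapsto f(y+sv)$ is lower semicontinuous on $\{s: y+sv\in U\}$. $f$ is $\ell$-stable at $x$ iff there exist a neighborhood $U$ of $x$ and $K>0$ with $|f'_D(y;u)-f'_D(x;u)|\le K\|y-x\|\,\|u\|$ for all $y\in U$, $u\in\mathbb{E}$. *)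

From Stdlib Require Fin.
From Stdlib Require Import Reals Lra.
Open Scope R_scope.

(* The finite-dimensional Euclidean space E is modelled as R^n,
   i.e. functions Fin.t n -> R with the standard inner product. *)
Definition E (n : nat) : Type := Fin.t n -> R.

Fixpoint fsum (n : nat) : (Fin.t n -> R) -> R :=
  match n return (Fin.t n -> R) -> R with
  | O => fun _ => 0
  | S m => fun x => x Fin.F1 + fsum m (fun i => x (Fin.FS i))
  end.

Definition vadd {n} (x y : E n) : E n := fun i => x i + y i.
Definition vsub {n} (x y : E n) : E n := fun i => x i - y i.
Definition vscal {n} (t : R) (x : E n) : E n := fun i => t * x i.
Definition vnorm {n} (x : E n) : R := sqrt (fsum n (fun i => x i * x i)).

(* [dini_eq f y u L] : the lower Dini directional derivative
   f'_D(y;u) = liminf_{t↓0} (f(y+tu)-f(y))/t exists as a finite real and equals L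
   (standard unfolding of "liminf = L"). *)
Definition dini_eq {n} (f : E n -> R) (y u : E n) (L : R) : Prop :=
  (forall eps, 0 < eps -> exists delta, 0 < delta /\
     forall t, 0 < t < delta -> L - eps < (f (vadd y (vscal t u)) - f y) / t)
  /\
  (forall eps delta, 0 < eps -> 0 < delta -> exists t, 0 < t < delta /\
     (f (vadd y (vscal t u)) - f y) / t < L + eps).

Definition lsc_on (g : R -> R) (S : R -> Prop) : Prop :=
  forall s0, S s0 -> forall eps, 0 < eps -> exists delta, 0 < delta /\
    forall s, S s -> Rabs (s - s0) < delta -> g s0 - eps < g s.

Definition radially_lsc_on {n} (f : E n -> R) (U : E n -> Prop) : Prop :=
  forall y v, U y -> lsc_on (fun s => f (vadd y (vscal s v)))
                            (fun s => U (vadd y (vscal s v))).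

Definition nbhd {n} (U : E n -> Prop) (x : E n) : Prop :=
  exists r, 0 < r /\ forall y, vnorm (vsub y x) < r -> U y.

Definition l_stable {n} (f : E n -> R) (x : E n) : Prop :=
  exists (U : E n -> Prop) (K : R), nbhd U x /\ 0 < K /\
    forall y u, U y -> exists Ly Lx, dini_eq f y u Ly /\ dini_eq f x u Lx /\
      Rabs (Ly - Lx) <= K * vnorm (vsub y x) * vnorm u.

(* Along the segment from x + t h to x + t h', every point lies within O(t) of x, so by
   ℓ-stability and f'_D(x;·) = 0 the lower Dini derivatives of f along the segment, in
   both directions, are O(t) * O(t |h' - h|).  A lower semicontinuous function whose lower
   Dini derivatives are bounded by M has increments bounded by M (a mean value inequality
   proved by a supremum argument), hence |f(x + t h') - f(x + t h)| = O(t^2 |h' - h|). *)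

From Stdlib Require Import Reals Lra FunctionalExtensionality Classical.
Open Scope R_scope.

Ltac vector_ext := apply functional_extensionality; intro; unfold vadd, vsub, vscal; ring.

Lemma fsum_le n : forall a b : Fin.t n -> R,
  (forall i, a i <= b i) -> fsum n a <= fsum n b.
Proof.
  induction n as [|n IH]; simpl; intros a b Hab; [lra|].
  pose proof (Hab Fin.F1).
  pose proof (IH (fun i => a (Fin.FS i)) (fun i => b (Fin.FS i)) (fun i => Hab (Fin.FS i))).
  lra.
Qed.

Lemma fsum_lin n : forall (a b : Fin.t n -> R) (c e : R),
  fsum n (fun i => c * a i + e * b i) = c * fsum n a + e * fsum n b.
Proof.
  induction n as [|n IH]; simpl; intros a b c e; [ring|].
  rewrite (IH (fun i => a (Fin.FS i)) (fun i => b (Fin.FS i))); ring.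
Qed.

Lemma fsum_scal n : forall (a : Fin.t n -> R) c,
  fsum n (fun i => c * a i) = c * fsum n a.
Proof.
  induction n as [|n IH]; simpl; intros a c; [ring|].
  rewrite (IH (fun i => a (Fin.FS i))); ring.
Qed.

Lemma fsum_sq_nonneg n : forall a : Fin.t n -> R, 0 <= fsum n (fun i => a i * a i).
Proof.
  induction n as [|n IH]; simpl; intros a; [lra|].
  pose proof (IH (fun i => a (Fin.FS i))); nra.
Qed.

Lemma vnorm_nonneg n (w : E n) : 0 <= vnorm w.
Proof. apply sqrt_pos. Qed.

Lemma vnorm_sq n (w : E n) : vnorm w * vnorm w = fsum n (fun i => w i * w i).
Proof. apply sqrt_sqrt, fsum_sq_nonneg. Qed.

Lemma vnorm_scal n a (w : E n) : vnorm (vscal a w) = Rabs a * vnorm w.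
Proof.
  unfold vnorm, vscal.
  replace (fun i => a * w i * (a * w i)) with (fun i => (a * a) * (w i * w i))
    by (apply functional_extensionality; intros; ring).
  rewrite fsum_scal, sqrt_mult_alt by nra.
  f_equal; apply sqrt_Rsqr_abs.
Qed.

Lemma vnorm_opp n (w : E n) : vnorm (vscal (-1) w) = vnorm w.
Proof. rewrite vnorm_scal, Rabs_left by lra; ring. Qed.

(* A substitute for the triangle inequality that needs no Cauchy-Schwarz. *)
Lemma vnorm_add_le n (a b : E n) :
  vnorm (vadd a b) <= sqrt (2 * (vnorm a * vnorm a) + 2 * (vnorm b * vnorm b)).
Proof.
  rewrite <- (sqrt_Rsqr (vnorm (vadd a b))) by apply vnorm_nonneg.
  apply sqrt_le_1_alt; unfold Rsqr.
  rewrite !vnorm_sq, <- fsum_lin.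
  apply fsum_le; intros i; unfold vadd.
  pose proof (Rle_0_sqr (a i - b i)); unfold Rsqr in *; nra.
Qed.

Lemma vnorm_segment_le n t s (h d : E n) :
  0 <= t -> 0 <= s <= 1 -> vnorm d <= 1 ->
  vnorm (vscal t (vadd h (vscal s d))) <= t * sqrt (2 * (vnorm h * vnorm h) + 2).
Proof.
  intros Ht Hs Hd.
  rewrite vnorm_scal, Rabs_right by lra.
  apply Rmult_le_compat_l; [lra|].
  eapply Rle_trans; [apply vnorm_add_le|].
  apply sqrt_le_1_alt.
  rewrite vnorm_scal, Rabs_right by lra.
  pose proof (vnorm_nonneg n d).
  assert (0 <= s * vnorm d <= 1) by (split; nra).
  nra.
Qed.

Lemma lsc_on_sub (g : R -> R) (S T : R -> Prop) :
  lsc_on g S -> (forall s, T s -> S s) -> lsc_on g T.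
Proof.
  intros Hg HTS s0 Hs0 eps Heps.
  destruct (Hg s0 (HTS s0 Hs0) eps Heps) as [delta [Hdelta Hnear]].
  exists delta; split; auto.
Qed.

Lemma radially_lsc_on_sub n (f : E n -> R) (U V : E n -> Prop) :
  radially_lsc_on f U -> (forall y, V y -> U y) -> radially_lsc_on f V.
Proof. intros Hf HVU y v Hy; apply (lsc_on_sub _ _ _ (Hf y v (HVU y Hy))); auto. Qed.

Lemma dini_eq_unique n (f : E n -> R) y u L1 L2 :
  dini_eq f y u L1 -> dini_eq f y u L2 -> L1 = L2.
Proof.
  assert (Hnlt : forall A B, dini_eq f y u A -> dini_eq f y u B -> ~ A < B).
  { intros A B [_ HA] [HB _] Hlt.
    destruct (HB ((B - A) / 2)) as [d [Hd Hbelow]]; [lra|].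
    destruct (HA ((B - A) / 2) d) as [t [Ht Habove]]; [lra|lra|].
    specialize (Hbelow t Ht); lra. }
  intros H1 H2; pose proof (Hnlt _ _ H1 H2); pose proof (Hnlt _ _ H2 H1); lra.
Qed.

Lemma dini_le_of_l_stable n (f : E n -> R) (x : E n) (U : E n -> Prop) (K : R) :
  (forall y u, U y -> exists Ly Lx, dini_eq f y u Ly /\ dini_eq f x u Lx /\
     Rabs (Ly - Lx) <= K * vnorm (vsub y x) * vnorm u) ->
  (forall u, dini_eq f x u 0) ->
  forall y u, U y -> exists L, dini_eq f y u L /\ L <= K * vnorm (vsub y x) * vnorm u.
Proof.
  intros Hstab Hx y u Hy.
  destruct (Hstab y u Hy) as [Ly [Lx [HLy [HLx Hbound]]]].
  rewrite (dini_eq_unique _ _ _ _ _ _ HLx (Hx u)), Rminus_0_r in Hbound.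
  exists Ly; split; [exact HLy|].
  eapply Rle_trans; [apply Rle_abs|exact Hbound].
Qed.

(* Supremum argument: at c = sup {s | psi > level on [0, s]} the lower semicontinuity
   forces psi c <= level, while psi > level just to the left of c. *)
Lemma lsc_le_of_left_drops (psi : R -> R) :
  lsc_on psi (fun s => 0 <= s <= 1) ->
  (forall c, 0 < c <= 1 -> forall d, 0 < d ->
     exists tau, 0 < tau < d /\ psi (c - tau) < psi c) ->
  psi 0 <= psi 1.
Proof.
  intros Hlsc Hdrop; apply Rnot_lt_le; intro H10.
  set (level := (psi 0 + psi 1) / 2).
  set (S := fun s => 0 <= s <= 1 /\ forall s', 0 <= s' <= s -> psi s' > level).
  assert (HS0 : S 0).
  { split; [lra|]. intros s' Hs'. replace s' with 0 by lra. unfold level; lra. }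
  destruct (completeness S) as [c [Hub Hlub]].
  { exists 1. intros s [Hs _]; lra. }
  { exists 0; auto. }
  assert (Hc0 : 0 <= c) by (apply Hub; auto).
  assert (Hc1 : c <= 1) by (apply Hlub; intros s [Hs _]; lra).
  assert (Hleft : forall s', 0 <= s' < c -> psi s' > level).
  { intros s' Hs'.
    destruct (classic (exists e, S e /\ s' < e)) as [[e [[_ He] Hse]]|Hnone].
    - apply He; lra.
    - assert (c <= s'); [|lra].
      apply Hlub; intros e He; apply Rnot_lt_le; intro; apply Hnone; eauto. }
  assert (Hc : psi c <= level).
  { apply Rnot_lt_le; intro Hc.
    destruct (Req_dec c 1) as [->|Hc1']; [unfold level in Hc; lra|].
    destruct (Hlsc c (conj Hc0 Hc1) (psi c - level)) as [d [Hd Hnear]]; [lra|].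
    set (c' := Rmin 1 (c + d / 2)).
    assert (Hc' : c < c' <= 1) by (unfold c', Rmin; destruct Rle_dec; lra).
    assert (HSc' : S c').
    { split; [lra|]. intros s' Hs'.
      destruct (Rlt_le_dec s' c); [apply Hleft; lra|].
      assert (psi c - (psi c - level) < psi s'); [|lra].
      apply Hnear; [lra|].
      rewrite Rabs_right by lra. assert (c' <= c + d / 2) by apply Rmin_r. lra. }
    pose proof (Hub c' HSc'); lra. }
  assert (Hcpos : 0 < c) by (destruct Hc0 as [|<-]; [auto|unfold level in Hc; lra]).
  destruct (Hdrop c (conj Hcpos Hc1) c Hcpos) as [tau [Htau Hlt]].
  assert (psi (c - tau) > level) by (apply Hleft; lra).
  lra.
Qed.

Lemma lsc_decrease_le_of_left_dini (phi : R -> R) (M : R) :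
  lsc_on phi (fun s => 0 <= s <= 1) ->
  (forall c, 0 < c <= 1 -> forall e, 0 < e -> forall d, 0 < d ->
     exists tau, 0 < tau < d /\ (phi (c - tau) - phi c) / tau < M + e) ->
  phi 0 - phi 1 <= M.
Proof.
  intros Hlsc Hdini; apply Rnot_lt_le; intro Hgt.
  set (ep := (phi 0 - phi 1 - M) / 2).
  assert (Hep : 0 < ep) by (unfold ep; lra).
  set (psi := fun s => phi s + (M + ep) * s).
  assert (psi 0 <= psi 1); [|unfold psi, ep in *; lra].
  apply lsc_le_of_left_drops.
  - intros s0 Hs0 e He.
    destruct (Hlsc s0 Hs0 (e / 2)) as [d [Hd Hnear]]; [lra|].
    set (A := Rabs (M + ep) + 1).
    assert (HA : 0 < A) by (unfold A; pose proof (Rabs_pos (M + ep)); lra).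
    exists (Rmin d (e / (2 * A))); split.
    { apply Rmin_pos; [lra|apply Rdiv_lt_0_compat; lra]. }
    intros s Hs Hss.
    pose proof (Rmin_l d (e / (2 * A))); pose proof (Rmin_r d (e / (2 * A))).
    specialize (Hnear s Hs ltac:(lra)).
    assert (Hslope : Rabs ((M + ep) * (s - s0)) < e / 2).
    { rewrite Rabs_mult.
      apply Rle_lt_trans with (A * Rabs (s - s0)).
      - apply Rmult_le_compat_r; [apply Rabs_pos|unfold A; lra].
      - apply Rlt_le_trans with (A * (e / (2 * A))); [apply Rmult_lt_compat_l; lra|].
        right; field; lra. }
    pose proof (Rabs_def2 _ _ Hslope); unfold psi; nra.
  - intros c Hc d Hd.
    destruct (Hdini c Hc (ep / 2) ltac:(lra) d Hd) as [tau [Htau Hq]].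
    exists tau; split; auto.
    assert (phi (c - tau) - phi c = (phi (c - tau) - phi c) / tau * tau) by (field; lra).
    unfold psi; nra.
Qed.

Section Segments.

Variables (n : nat) (f : E n -> R) (x : E n) (U : E n -> Prop) (r K : R).
Hypothesis HK : 0 <= K.
Hypothesis HUball : forall y, vnorm (vsub y x) < r -> U y.
Hypothesis Hlsc : radially_lsc_on f U.
Hypothesis Hdini : forall y u, U y ->
  exists L, dini_eq f y u L /\ L <= K * vnorm (vsub y x) * vnorm u.

Lemma segment_decrease_le (y v : E n) (Rad : R) :
  (forall s, 0 <= s <= 1 -> vnorm (vsub (vadd y (vscal s v)) x) <= Rad) -> Rad < r ->
  f y - f (vadd y v) <= K * Rad * vnorm v.
Proof.
  intros Hseg HRad.
  assert (Hin : forall s, 0 <= s <= 1 -> U (vadd y (vscal s v)))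
    by (intros s Hs; apply HUball; specialize (Hseg s Hs); lra).
  assert (Hy : U y) by (replace y with (vadd y (vscal 0 v)) by vector_ext; apply Hin; lra).
  replace (f y) with (f (vadd y (vscal 0 v))) by (f_equal; vector_ext).
  replace (vadd y v) with (vadd y (vscal 1 v)) by vector_ext.
  apply (lsc_decrease_le_of_left_dini (fun s => f (vadd y (vscal s v)))).
  - apply (lsc_on_sub _ _ _ (Hlsc y v Hy)); exact Hin.
  - intros c Hc e He d Hd.
    destruct (Hdini (vadd y (vscal c v)) (vscal (-1) v)) as [L [[_ Hbelow] HL]];
      [apply Hin; lra|].
    destruct (Hbelow e d He Hd) as [tau [Htau Hq]].
    exists tau; split; [exact Htau|].
    replace (vadd y (vscal (c - tau) v))
      with (vadd (vadd y (vscal c v)) (vscal tau (vscal (-1) v))) by vector_ext.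
    assert (L <= K * Rad * vnorm v); [|lra].
    rewrite vnorm_opp in HL.
    pose proof (vnorm_nonneg n v).
    pose proof (Hseg c ltac:(lra)).
    apply (Rle_trans _ _ _ HL), Rmult_le_compat_r, Rmult_le_compat_l; auto.
Qed.

Lemma segment_increment_le (y v : E n) (Rad : R) :
  (forall s, 0 <= s <= 1 -> vnorm (vsub (vadd y (vscal s v)) x) <= Rad) -> Rad < r ->
  Rabs (f (vadd y v) - f y) <= K * Rad * vnorm v.
Proof.
  intros Hseg HRad.
  pose proof (segment_decrease_le y v Rad Hseg HRad) as Hforward.
  assert (Hbackward : f (vadd y v) - f (vadd (vadd y v) (vscal (-1) v)) <= K * Rad * vnorm (vscal (-1) v)).
  { apply segment_decrease_le; [|exact HRad].
    intros s Hs.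
    replace (vadd (vadd y v) (vscal s (vscal (-1) v))) with (vadd y (vscal (1 - s) v))
      by vector_ext.
    apply Hseg; lra. }
  replace (vadd (vadd y v) (vscal (-1) v)) with y in Hbackward by vector_ext.
  rewrite vnorm_opp in Hbackward.
  apply Rabs_le; lra.
Qed.

End Segments.

Lemma Rabs_div_sq_lt (a t B eps : R) :
  0 < t -> Rabs a <= B * (t * t) -> B < eps -> Rabs (a / (t * t)) < eps.
Proof.
  intros Ht Ha HB.
  unfold Rdiv; rewrite Rabs_mult, Rabs_inv, (Rabs_right (t * t)) by nra.
  apply Rle_lt_trans with B; [|exact HB].
  apply (Rmult_le_reg_r (t * t)); [nra|].
  rewrite Rmult_assoc, Rinv_l by nra; lra.
Qed.

Theorem lemma4 (n : nat) (f : E n -> R) (x : E n) :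
  (exists U : E n -> Prop, nbhd U x /\ radially_lsc_on f U) ->
  l_stable f x ->
  (forall u : E n, dini_eq f x u 0) ->
  forall h : E n,
    forall eps, 0 < eps -> exists delta, 0 < delta /\
      forall t (h' : E n), 0 < t < delta -> vnorm (vsub h' h) < delta ->
        Rabs ((f (vadd x (vscal t h')) - f (vadd x (vscal t h))) / (t * t)) < eps.
Proof.
  intros [U2 [[r2 [Hr2 HU2]] Hlsc]] [U1 [K [[r1 [Hr1 HU1]] [HK Hstab]]]] Hx h eps Heps.
  set (r := Rmin r1 r2).
  assert (Hr : 0 < r) by (apply Rmin_pos; lra).
  assert (HUball : forall y, vnorm (vsub y x) < r -> U1 y /\ U2 y).
  { intros y Hy; pose proof (Rmin_l r1 r2); pose proof (Rmin_r r1 r2).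
    split; [apply HU1|apply HU2]; unfold r in Hy; lra. }
  set (C := sqrt (2 * (vnorm h * vnorm h) + 2)).
  assert (HC : 0 < C) by (apply sqrt_lt_R0; pose proof (vnorm_nonneg n h); nra).
  exists (Rmin 1 (Rmin (eps / (K * C)) (r / C))); split.
  { apply Rmin_pos; [lra|apply Rmin_pos; apply Rdiv_lt_0_compat; nra]. }
  intros t h' [Ht Htdelta] Hdelta.
  pose proof (Rmin_l 1 (Rmin (eps / (K * C)) (r / C))).
  pose proof (Rmin_r 1 (Rmin (eps / (K * C)) (r / C))).
  pose proof (Rmin_l (eps / (K * C)) (r / C)); pose proof (Rmin_r (eps / (K * C)) (r / C)).
  set (d := vsub h' h) in *.
  apply Rabs_div_sq_lt with (K * C * vnorm d); [lra| |].
  - replace (vadd x (vscal t h')) with (vadd (vadd x (vscal t h)) (vscal t d))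
      by (unfold d; vector_ext).
    replace (K * C * vnorm d * (t * t)) with (K * (t * C) * vnorm (vscal t d))
      by (rewrite vnorm_scal, Rabs_right by lra; ring).
    apply (segment_increment_le n f x (fun y => U1 y /\ U2 y) r K); try lra.
    + exact HUball.
    + apply (radially_lsc_on_sub _ _ U2); tauto.
    + intros y u [Hy _]; exact (dini_le_of_l_stable _ _ _ _ _ Hstab Hx y u Hy).
    + intros s Hs.
      replace (vsub (vadd (vadd x (vscal t h)) (vscal s (vscal t d))) x)
        with (vscal t (vadd h (vscal s d))) by (unfold d; vector_ext).
      apply vnorm_segment_le; lra.
    + apply (Rmult_lt_reg_r (/ C)); [apply Rinv_0_lt_compat; lra|].
      replace (t * C * / C) with t by (field; lra); lra.
  - apply (Rmult_lt_reg_r (/ (K * C))); [apply Rinv_0_lt_compat; nra|].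
    replace (K * C * vnorm d * / (K * C)) with (vnorm d) by (field; lra); lra.
Qed.
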